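(* For any complex numbers $a,b,\alpha,\beta,\eta,\xi$ with $\beta a-\alpha b\neq0$ and any natural number $n\ge1$, \[ \sum_{r=0}^{\lfloor n/2\rfloor}\Psi\left(\begin{array}{cc|c} a & b & n \\ \alpha & \beta & r \end{array}\right)\xi^{\lfloor n/2\rfloor-r}\eta^r=\Psi(a\xi-\alpha\eta,\,b\xi-\beta\eta,\,n), \] \[ \sum_{r=0}^{\lfloor (n-1)/2\rfloor}\Phi\left(\begin{array}{cc|c} a & b & n \\ \alpha & \beta & r \end{array}\right)\xi^{\lfloor (n-1)/2\rfloor-r}\eta^r=\Phi(a\xi-\alpha\eta,\,b\xi-\beta\eta,\,n). \]
   Context: $\delta(m)=1$ for $m$ odd, $0$ for $m$ even; $\lfloor\cdot\rfloor$ is the floor. $\Psi(a,b,n)$, $\Phi(a,b,n)$ are defined by $\Psi(a,b,0)=2$, $\Psi(a,b,1)=1$, $\Psi(a,b,n+1)=(2a-b)^{\delta(n)}\Psi(a,b,n)-a\Psi(a,b,n-1)$ and $\Phi(a,b,0)=0$, $\Phi(a,b,1)=1$, $\Phi(a,b,n+1)=(2a-b)^{\delta(n+1)}\Phi(a,b,n)-a\Phi(a,b,n-1)$. For $n\ge1$ and numbers with $\beta a-\alpha b\ne0$, $\Psi\left(\begin{array}{cc|c} a & b & n \\ \alpha & \beta & r \end{array}\right)$ ($0\le r\le\lfloor n/2\rfloor$) and $\Phi\left(\begin{array}{cc|c} a & b & n \\ \alpha & \beta & r \end{array}\right)$ ($0\le r\le\lfloor (n-1)/2\rfloor$) are the unique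 numbers such that, identically in $x,y$, $(\beta a-\alpha b)^{\lfloor n/2\rfloor}\frac{x^n+y^n}{(x+y)^{\delta(n)}}=\sum_{r}\Psi\left(\begin{array}{cc|c} a & b & n \\ \alpha & \beta & r \end{array}\right)(\alpha x^2+\beta xy+\alpha y^2)^{\lfloor n/2\rfloor-r}(ax^2+bxy+ay^2)^r$ and $(\beta a-\alpha b)^{\lfloor (n-1)/2\rfloor}\frac{x^n-y^n}{(x-y)(x+y)^{\delta(n-1)}}=\sum_{r}\Phi\left(\begin{array}{cc|c} a & b & n \\ \alpha & \beta & r \end{array}\right)(\alpha x^2+\beta xy+\alpha y^2)^{\lfloor (n-1)/2\rfloor-r}(ax^2+bxy+ay^2)^r$. *)

From HB Require Import structures.
From mathcomp Require Import all_boot all_order all_algebra.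
From mathcomp Require Import complex.
From mathcomp Require Import reals.
From Stdlib Require Import ClassicalEpsilon.
Set Implicit Arguments. Unset Strict Implicit. Unset Printing Implicit Defensive.
Import Order.TTheory GRing.Theory Num.Theory.
Local Open Scope ring_scope.

Section Defs.
Variable F : fieldType.

Definition delta (m : nat) : nat := odd m.

(* (Psi(a,b,n), Psi(a,b,n+1)) *)
Fixpoint PsiPair (a b : F) (n : nat) : F * F :=
  match n with
  | 0 => (2, 1)
  | n'.+1 => let: (p, q) := PsiPair a b n' in
             (q, (2 * a - b) ^+ delta n * q - a * p)
  end.
Definition Psi (a b : F) (n : nat) : F := (PsiPair a b n).1.

(* (Phi(a,b,n), Phi(a,b,n+1)) *)
Fixpoint PhiPair (a b : F) (n : nat) : F * F :=
  match n with
  | 0 => (0, 1)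
  | n'.+1 => let: (p, q) := PhiPair a b n' in
             (q, (2 * a - b) ^+ delta n.+1 * q - a * p)
  end.
Definition Phi (a b : F) (n : nat) : F := (PhiPair a b n).1.

(* defining identity of the coefficients Psi(a b n | alpha beta r),
   r = 0 .. floor(n/2), "identically in x, y" (away from the pole x+y=0) *)
Definition is_Psi_coef (a b al be : F) (n : nat) (c : nat -> F) : Prop :=
  forall x y : F, x + y != 0 ->
    (be * a - al * b) ^+ n./2 * ((x ^+ n + y ^+ n) / (x + y) ^+ delta n)
    = \sum_(0 <= r < n./2.+1)
        c r * (al * x ^+ 2 + be * x * y + al * y ^+ 2) ^+ (n./2 - r)
            * (a * x ^+ 2 + b * x * y + a * y ^+ 2) ^+ r.

Definition is_Phi_coef (a b al be : F) (n : nat) (c : nat -> F) : Prop :=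
  forall x y : F, x - y != 0 -> x + y != 0 ->
    (be * a - al * b) ^+ n.-1./2
      * ((x ^+ n - y ^+ n) / ((x - y) * (x + y) ^+ delta n.-1))
    = \sum_(0 <= r < n.-1./2.+1)
        c r * (al * x ^+ 2 + be * x * y + al * y ^+ 2) ^+ (n.-1./2 - r)
            * (a * x ^+ 2 + b * x * y + a * y ^+ 2) ^+ r.

(* "the unique numbers" satisfying the identity (chosen by description;
   existence/uniqueness is the paper's claim, to be used in proofs) *)
Definition PsiC (a b al be : F) (n : nat) : nat -> F :=
  epsilon (inhabits (fun _ => 0)) (is_Psi_coef a b al be n).
Definition PhiC (a b al be : F) (n : nat) : nat -> F :=
  epsilon (inhabits (fun _ => 0)) (is_Phi_coef a b al be n).
End Defs.

(* Psi(a,b,.) and Phi(a,b,.+1) are the values at (2a-b, a) of one recurrence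
   W_(n+1)(S,P) = S^odd(n) W_n - P W_(n-1), which is homogeneous of degree n/2 in (S,P) and equals
   (x^n + y^n)/(x+y)^odd(n), resp. (x^(n+1) - y^(n+1))/((x-y)(x+y)^odd(n)), at (S,P) = ((x+y)^2, xy).
   For u = al x^2 + be x y + al y^2, v = a x^2 + b x y + a y^2 and D = be a - al b one has
   D (x+y)^2 = (2a-b) u - (2al-be) v and D x y = a u - al v, so D^(n/2) W_n((x+y)^2, xy) is the
   binary form W_n((2a-b) u - (2al-be) v, a u - al v) in (u,v); at (u,v) = (xi,eta) it is the
   right-hand side.  Its coefficients are the only valid ones: over C every (u,v) off two lines
   comes from some x <> +-y, and a binary form vanishing off two lines is zero. *)

From HB Require Import structures.
From mathcomp Require Import all_boot all_order all_algebra.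
From mathcomp Require Import complex reals.
From mathcomp Require Import ring zify.
From Stdlib Require Import ClassicalEpsilon.
Set Implicit Arguments. Unset Strict Implicit. Unset Printing Implicit Defensive.
Import Order.TTheory GRing.Theory Num.Theory.
Local Open Scope ring_scope.

Local Notation quad u v x y := (u * x ^+ 2 + v * x * y + u * y ^+ 2).

Lemma nat_ind2 (Q : nat -> Prop) :
  Q 0%N -> Q 1%N -> (forall n, Q n -> Q n.+1 -> Q n.+2) -> forall n, Q n.
Proof.
move=> Q0 Q1 QS n; suff [] : Q n /\ Q n.+1 by [].
by elim: n => [|n [Qn Qn1]]; split; last exact: QS.
Qed.

Section Lucas.
Variables w0 w1 : nat.

Fixpoint lucas_pair (R : comPzRingType) (S P : R) (n : nat) : R * R :=
  match n with
  | 0 => (w0%:R, w1%:R)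
  | n'.+1 => let: (p, q) := lucas_pair S P n' in (q, S ^+ odd n * q - P * p)
  end.

Definition lucas (R : comPzRingType) (S P : R) (n : nat) : R := (lucas_pair S P n).1.

Section LucasRing.
Variable R : comPzRingType.
Implicit Types (S P k x y : R).

Lemma lucas_pairE S P n : lucas_pair S P n = (lucas S P n, lucas S P n.+1).
Proof. by elim: n => [|n IH] //; rewrite /lucas /= IH. Qed.

Lemma lucas0 S P : lucas S P 0 = w0%:R. Proof. by []. Qed.

Lemma lucas1 S P : lucas S P 1 = w1%:R. Proof. by []. Qed.

Lemma lucasSS S P n :
  lucas S P n.+2 = S ^+ odd n.+1 * lucas S P n.+1 - P * lucas S P n.
Proof. by rewrite /lucas /= lucas_pairE. Qed.

Lemma lucas_homog k S P n : lucas (k * S) (k * P) n = k ^+ n./2 * lucas S P n.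
Proof.
elim/nat_ind2: n => [||n IHn IHn1]; rewrite ?expr0 ?mul1r //.
rewrite !lucasSS IHn IHn1 /= uphalf_half.
by case: (odd n); rewrite /= ?add0n ?add1n !exprS ?expr0; ring.
Qed.

Lemma lucas_sum_prod x y c (z : nat -> R) :
  z 0%N = c * w0%:R -> z 1%N = c * w1%:R * (x + y) ->
  (forall n, z n.+2 = (x + y) * z n.+1 - x * y * z n) ->
  forall n, c * lucas ((x + y) ^+ 2) (x * y) n * (x + y) ^+ odd n = z n.
Proof.
move=> z0 z1 zSS; elim/nat_ind2 => [||n IHn IHn1]; first by rewrite mulr1 z0.
  by rewrite expr1 z1.
rewrite zSS -IHn -IHn1 lucasSS /=.
by case: (odd n); rewrite /= ?expr0 ?expr1; ring.
Qed.

End LucasRing.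

Lemma rmorph_lucas (R R' : comPzRingType) (f : {rmorphism R -> R'}) (S P : R) n :
  f (lucas S P n) = lucas (f S) (f P) n.
Proof.
elim/nat_ind2: n => [||n IHn IHn1]; rewrite ?rmorph_nat //.
by rewrite lucasSS rmorphB !rmorphM rmorphXn IHn IHn1 lucasSS.
Qed.

Lemma size_lucas (R : comNzRingType) (S P : {poly R}) n :
  (size S <= 2)%N -> (size P <= 2)%N -> (size (lucas S P n) <= n./2.+1)%N.
Proof.
move=> S2 P2; have sizeX e : (size (S ^+ e) <= e.+1)%N.
  by apply: leq_trans (size_poly_exp_leq S e) _; rewrite ltnS; nia.
have sizeM (p q : {poly R}) i j :
    (size p <= i)%N -> (size q <= j)%N -> (size (p * q)%R <= (i + j).-1)%N.
  by move=> pi qj; apply: leq_trans (size_polyMleq p q) _; lia.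
elim/nat_ind2: n => [||n IHn IHn1].
- by rewrite lucas0 -polyC_natr size_polyC; case: (_ != _).
- by rewrite lucas1 -polyC_natr size_polyC; case: (_ != _).
rewrite lucasSS; apply: leq_trans (size_polyD _ _) _.
rewrite size_polyN geq_max; apply/andP; split.
  apply: leq_trans (sizeM _ _ _ _ (sizeX _) IHn1) _.
  by rewrite /= uphalf_half; case: (odd n) => /=; lia.
by apply: leq_trans (sizeM _ _ _ _ P2 IHn) _; lia.
Qed.

Lemma horner_lucas (R : comNzRingType) (S P : {poly R}) n t :
  (lucas S P n).[t] = lucas S.[t] P.[t] n.
Proof. exact: (rmorph_lucas (horner_eval t)). Qed.

End Lucas.

Lemma poly_eq0_cofinite (F : numFieldType) (p : {poly F}) (s : seq F) :
  (forall x, x \notin s -> p.[x] = 0) -> p = 0.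
Proof.
move=> p0; pose l := [seq i%:R : F | i <- iota 0 (size p + size s)].
have ul : uniq l by rewrite map_inj_uniq ?iota_uniq // => i j /eqP; rewrite eqr_nat => /eqP.
have ls : (count (mem s) l <= size s)%N.
  rewrite -size_filter uniq_leq_size ?filter_uniq // => x.
  by rewrite mem_filter => /andP[].
apply: (roots_geq_poly_eq0 (rs := filter (predC (mem s)) l)).
- by apply/allP => x; rewrite mem_filter => /andP[/p0 px _]; apply/eqP.
- exact: filter_uniq.
have := count_predC (mem s) l; rewrite size_filter size_map size_iota.
by move=> E; rewrite -(leq_add2r (size s)) -E addnC leq_add2l.
Qed.

Lemma size_linear_le2 (R : nzRingType) (c d : R) : (size (d%:P * 'X + c%:P)%R <= 2)%N.
Proof. by rewrite size_MXaddC; case: ifP => // _; rewrite ltnS size_polyC leq_b1. Qed.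

Lemma homog_coef_sum (F : fieldType) (q : {poly F}) m xi eta :
  (size q <= m.+1)%N -> xi != 0 ->
  \sum_(0 <= r < m.+1) q`_r * xi ^+ (m - r) * eta ^+ r = xi ^+ m * q.[eta / xi].
Proof.
move=> qm xi0; rewrite (horner_coef_wide _ qm) mulr_sumr big_mkord.
apply: eq_bigr => i _; have im : (i <= m)%N by rewrite -ltnS.
have -> : xi ^+ m = xi ^+ (m - i) * xi ^+ i by rewrite -exprD subnK.
by rewrite expr_div_n; field; rewrite expf_neq0.
Qed.

Section LucasForm.
Variable F : numFieldType.
Variables (w0 w1 n : nat) (a b al be : F).

Definition lucas_form (xi eta : F) : F :=
  lucas w0 w1 ((2 * a - b) * xi - (2 * al - be) * eta) (a * xi - al * eta) n.

Definition lucas_form_poly : {poly F} :=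
  lucas w0 w1 ((- (2 * al - be))%:P * 'X + (2 * a - b)%:P) ((- al)%:P * 'X + a%:P) n.

Lemma lucas_form_expand_neq0 xi eta : xi != 0 ->
  \sum_(0 <= r < n./2.+1) lucas_form_poly`_r * xi ^+ (n./2 - r) * eta ^+ r
  = lucas_form xi eta.
Proof.
move=> xi0; rewrite homog_coef_sum ?size_lucas ?size_linear_le2 //.
rewrite horner_lucas !(hornerD, hornerCM, hornerX, hornerC) /lucas_form -lucas_homog.
by congr lucas; field.
Qed.

Lemma lucas_form_expand xi eta :
  \sum_(0 <= r < n./2.+1) lucas_form_poly`_r * xi ^+ (n./2 - r) * eta ^+ r
  = lucas_form xi eta.
Proof.
have [->|xi0] := eqVneq xi 0; last exact: lucas_form_expand_neq0.
(* Both sides are polynomials in xi that agree for xi <> 0. *)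
pose q1 : {poly F} :=
  \sum_(0 <= r < n./2.+1) (lucas_form_poly`_r * eta ^+ r) *: 'X^(n./2 - r).
pose q2 : {poly F} := lucas w0 w1 ((2 * a - b)%:P * 'X + (- ((2 * al - be) * eta))%:P)
                                  (a%:P * 'X + (- (al * eta))%:P) n.
have q1E t : q1.[t] = \sum_(0 <= r < n./2.+1) lucas_form_poly`_r * t ^+ (n./2 - r) * eta ^+ r.
  by rewrite horner_sum; apply: eq_bigr => r _; rewrite hornerZ hornerXn mulrAC.
have q2E t : q2.[t] = lucas_form t eta.
  by rewrite horner_lucas !(hornerD, hornerCM, hornerX, hornerC).
have : q1 - q2 = 0.
  apply: (poly_eq0_cofinite (s := [:: 0])) => t; rewrite inE => t0.
  by rewrite hornerD hornerN q1E q2E lucas_form_expand_neq0 // subrr.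
by move/(congr1 (horner^~ 0)); rewrite hornerD hornerN q1E q2E horner0 => /subr0_eq.
Qed.

Definition is_lucas_form_coef (c : nat -> F) : Prop :=
  forall x y, x - y != 0 -> x + y != 0 ->
    (be * a - al * b) ^+ n./2 * lucas w0 w1 ((x + y) ^+ 2) (x * y) n
    = \sum_(0 <= r < n./2.+1) c r * (quad al be x y) ^+ (n./2 - r) * (quad a b x y) ^+ r.

Lemma lucas_form_quad x y :
  lucas_form (quad al be x y) (quad a b x y)
  = (be * a - al * b) ^+ n./2 * lucas w0 w1 ((x + y) ^+ 2) (x * y) n.
Proof. by rewrite /lucas_form -lucas_homog; congr lucas; ring. Qed.

Lemma lucas_form_poly_quad x y :
  (be * a - al * b) ^+ n./2 * lucas w0 w1 ((x + y) ^+ 2) (x * y) n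
  = \sum_(0 <= r < n./2.+1)
      lucas_form_poly`_r * (quad al be x y) ^+ (n./2 - r) * (quad a b x y) ^+ r.
Proof. by rewrite lucas_form_expand lucas_form_quad. Qed.

End LucasForm.

Lemma linear_form_neq0 (F : fieldType) (c1 c2 t : F) :
  (c1 != 0) || (c2 != 0) -> t != - c1 / c2 -> c1 + c2 * t != 0.
Proof.
have [->|c20] := eqVneq c2 0; first by rewrite mul0r addr0 orbF.
move=> _; apply: contra; rewrite addrC addr_eq0 => /eqP <-.
by rewrite mulrC mulKf.
Qed.

Lemma binary_form_eq0 (F : numFieldType) (d : nat -> F) m (c1 c2 e1 e2 : F) :
  (c1 != 0) || (c2 != 0) -> (e1 != 0) || (e2 != 0) ->
  (forall xi eta, c1 * xi + c2 * eta != 0 -> e1 * xi + e2 * eta != 0 ->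
     \sum_(0 <= r < m.+1) d r * xi ^+ (m - r) * eta ^+ r = 0) ->
  forall r, (r <= m)%N -> d r = 0.
Proof.
move=> c0 e0 d0.
(* Dehomogenise at xi = 1. *)
have : \poly_(i < m.+1) d i = 0.
  apply: (poly_eq0_cofinite (s := [:: - c1 / c2; - e1 / e2])) => t.
  rewrite !inE negb_or => /andP[tc te].
  have ct : c1 * 1 + c2 * t != 0 by rewrite mulr1 linear_form_neq0.
  have et : e1 * 1 + e2 * t != 0 by rewrite mulr1 linear_form_neq0.
  rewrite horner_poly; apply: etrans (d0 1 t ct et); rewrite big_mkord.
  by apply: eq_bigr => i _; rewrite expr1n mulr1.
by move=> d0poly r rm; have := congr1 (coefp r) d0poly; rewrite /= coef_poly coef0 ltnS rm.
Qed.

Lemma quad_sum_diff (F : numFieldType) (u v x y : F) :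
  quad u v x y
  = u * ((x + y) ^+ 2 + (x - y) ^+ 2) / 2 + v * ((x + y) ^+ 2 - (x - y) ^+ 2) / 4.
Proof. by field. Qed.

Lemma quad_pair_onto (F : numClosedFieldType) (a b al be xi eta : F) :
  be * a - al * b != 0 ->
  (2 * a - b) * xi - (2 * al - be) * eta != 0 ->
  (2 * a + b) * xi - (2 * al + be) * eta != 0 ->
  exists x y, [/\ x - y != 0, x + y != 0,
    quad al be x y = xi &
    quad a b x y = eta].
Proof.
set D := be * a - al * b => D0 Sne0 Tne0.
(* x + y and x - y must square to these, as D (x-y)^2 = D (x+y)^2 - 4 D x y. *)
pose s := sqrtC (((2 * a - b) * xi - (2 * al - be) * eta) / D).
pose r := sqrtC (- ((2 * a + b) * xi - (2 * al + be) * eta) / D).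
have s2 : s ^+ 2 = ((2 * a - b) * xi - (2 * al - be) * eta) / D by rewrite sqrtCK.
have r2 : r ^+ 2 = - ((2 * a + b) * xi - (2 * al + be) * eta) / D by rewrite sqrtCK.
exists ((s + r) / 2), ((s - r) / 2); rewrite !quad_sum_diff.
have -> : (s + r) / 2 + (s - r) / 2 = s by field.
have -> : (s + r) / 2 - (s - r) / 2 = r by field.
rewrite s2 r2; split.
- by rewrite -sqrf_eq0 r2 mulf_neq0 ?invr_eq0 ?oppr_eq0.
- by rewrite -sqrf_eq0 s2 mulf_neq0 ?invr_eq0.
- by rewrite /D; field.
- by rewrite /D; field.
Qed.

Section LucasFormCoef.
Variable F : numClosedFieldType.
Variables (w0 w1 n : nat) (a b al be : F).
Hypothesis D0 : be * a - al * b != 0.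

Lemma lucas_form_coef_unique (c : nat -> F) : is_lucas_form_coef w0 w1 n a b al be c ->
  forall r, (r <= n./2)%N -> c r = (lucas_form_poly w0 w1 n a b al be)`_r.
Proof.
move=> cE r rn; apply/eqP; rewrite -subr_eq0; apply/eqP; move: r rn.
apply: (binary_form_eq0 (d := fun r => c r - _`_r) (m := n./2)
  (c1 := 2 * a - b) (c2 := - (2 * al - be)) (e1 := 2 * a + b) (e2 := - (2 * al + be))).
- rewrite -negb_and; apply: contra D0 => /andP[/eqP Sa /eqP Sal]; apply/eqP.
  have -> : be * a - al * b = al * (2 * a - b) + a * (- (2 * al - be)) by ring.
  by rewrite Sa Sal !mulr0 addr0.
- rewrite -negb_and; apply: contra D0 => /andP[/eqP Ta /eqP Tal]; apply/eqP.
  have -> : be * a - al * b = - al * (2 * a + b) - a * (- (2 * al + be)) by ring.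
  by rewrite Ta Tal !mulr0 subrr.
move=> xi eta; rewrite !mulNr => Sne0 Tne0.
have [x [y [xy0 xy1 <- <-]]] := quad_pair_onto D0 Sne0 Tne0.
under eq_bigr do rewrite !mulrBl.
by rewrite sumrB -cE // lucas_form_poly_quad subrr.
Qed.

Lemma lucas_form_coef_sum (c : nat -> F) : is_lucas_form_coef w0 w1 n a b al be c ->
  forall xi eta, \sum_(0 <= r < n./2.+1) c r * xi ^+ (n./2 - r) * eta ^+ r
                 = lucas_form w0 w1 n a b al be xi eta.
Proof.
move=> cE xi eta; rewrite -lucas_form_expand.
by apply: eq_big_nat => r /andP[_ rn]; rewrite (lucas_form_coef_unique cE rn).
Qed.

End LucasFormCoef.

Section PsiPhi.
Variables (F : fieldType) (a b : F).

Lemma Psi_lucas n : Psi a b n = lucas 2 1 (2 * a - b) a n.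
Proof.
suff E : PsiPair a b n = lucas_pair 2 1 (2 * a - b) a n by rewrite /Psi /lucas E.
by elim: n => //= n ->.
Qed.

Lemma Phi_lucas n : Phi a b n.+1 = lucas 1 1 (2 * a - b) a n.
Proof.
suff E : PhiPair a b n.+1 = lucas_pair 1 1 (2 * a - b) a n by rewrite /Phi /lucas E.
elim: n => [|n IH]; first by rewrite /= expr0 mulr1 mulr0 subr0.
rewrite -[PhiPair a b n.+2]/(let: (p, q) := PhiPair a b n.+1 in
                               (q, (2 * a - b) ^+ delta n.+3 * q - a * p)) IH /=.
by case: (lucas_pair _ _ _ _ n) => p q; rewrite /delta /= negbK.
Qed.

Lemma sum_pow_lucas (x y : F) n : x + y != 0 ->
  (x ^+ n + y ^+ n) / (x + y) ^+ delta n = lucas 2 1 ((x + y) ^+ 2) (x * y) n.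
Proof.
move=> xy0; apply: (canLR (mulfK (expf_neq0 _ xy0))); rewrite -[lucas _ _ _ _ n]mul1r.
by apply/esym/(lucas_sum_prod (z := fun k => x ^+ k + y ^+ k)) => [||k];
  rewrite ?exprS ?expr0; ring.
Qed.

Lemma diff_pow_lucas (x y : F) n : x - y != 0 -> x + y != 0 ->
  (x ^+ n.+1 - y ^+ n.+1) / ((x - y) * (x + y) ^+ delta n)
  = lucas 1 1 ((x + y) ^+ 2) (x * y) n.
Proof.
move=> xy0 xy1; apply: (canLR (mulfK (mulf_neq0 xy0 (expf_neq0 _ xy1)))).
rewrite mulrA [_ * (x - y)]mulrC.
by apply/esym/(lucas_sum_prod (z := fun k => x ^+ k.+1 - y ^+ k.+1)) => [||k];
  rewrite ?exprS ?expr0; ring.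
Qed.

End PsiPhi.

Section Coefficients.
Variables (F : numClosedFieldType) (a b al be : F).
Hypothesis D0 : be * a - al * b != 0.

Lemma PsiC_sum n xi eta :
  \sum_(0 <= r < n./2.+1) PsiC a b al be n r * xi ^+ (n./2 - r) * eta ^+ r
  = Psi (a * xi - al * eta) (b * xi - be * eta) n.
Proof.
have PsiC_spec : is_Psi_coef a b al be n (PsiC a b al be n).
  apply: epsilon_spec; exists (fun r => (lucas_form_poly 2 1 n a b al be)`_r) => x y xy0.
  by rewrite sum_pow_lucas // lucas_form_poly_quad.
rewrite (@lucas_form_coef_sum _ 2 1 _ _ _ _ _ D0 (PsiC a b al be n)) => [|x y _ xy0].
  by rewrite Psi_lucas /lucas_form; congr lucas; ring.
by rewrite -sum_pow_lucas // PsiC_spec.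
Qed.

Lemma PhiC_sum n xi eta : (0 < n)%N ->
  \sum_(0 <= r < n.-1./2.+1) PhiC a b al be n r * xi ^+ (n.-1./2 - r) * eta ^+ r
  = Phi (a * xi - al * eta) (b * xi - be * eta) n.
Proof.
case: n => // k _.
have PhiC_spec : is_Phi_coef a b al be k.+1 (PhiC a b al be k.+1).
  apply: epsilon_spec; exists (fun r => (lucas_form_poly 1 1 k a b al be)`_r).
  by move=> x y xy0 xy1; rewrite diff_pow_lucas // lucas_form_poly_quad.
rewrite (@lucas_form_coef_sum _ 1 1 _ _ _ _ _ D0 (PhiC a b al be k.+1)) => [|x y xy0 xy1].
  by rewrite Phi_lucas /lucas_form; congr lucas; ring.
by rewrite -diff_pow_lucas // PhiC_spec.
Qed.

End Coefficients.

Local Open Scope complex_scope.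

Theorem theorem10p2 (R : realType) (a b al be eta xi : R[i]) (n : nat) :
  be * a - al * b != 0 -> (0 < n)%N ->
  (\sum_(0 <= r < n./2.+1) PsiC a b al be n r * xi ^+ (n./2 - r) * eta ^+ r
     = Psi (a * xi - al * eta) (b * xi - be * eta) n)
  /\
  (\sum_(0 <= r < n.-1./2.+1) PhiC a b al be n r * xi ^+ (n.-1./2 - r) * eta ^+ r
     = Phi (a * xi - al * eta) (b * xi - be * eta) n).
Proof. by move=> D0 n0; split; [exact: PsiC_sum | exact: PhiC_sum]. Qed.
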